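(* Let $L$ be a distributive lattice. The relation $\le$ on positive simple functions over $L$ is transitive: if $\sum_ir_ia_i\le\sum_js_jb_j$ and $\sum_js_jb_j\le\sum_kt_kc_k$, then $\sum_ir_ia_i\le\sum_kt_kc_k$.
   Context: A positive simple function over a distributive lattice $L$ is a formal finite sum $\sum_i r_ix_i$ with rationals $r_i\ge0$ and $x_i\in L$. For a finite index set $I$, $x_I:=\bigwedge_{i\in I}x_i$ ($x_\emptyset=1$) and $r_I:=\sum_{i\in I}r_i$ ($r_\emptyset=0$). Define $\sum_ir_ix_i\le\sum_js_jy_j$ iff for every finite index set $I$, $x_I\le\bigvee\{y_J: J\text{ a finite index set with } r_I\le s_J\}$. *)

From HB Require Import structures.
From mathcomp Require Import all_boot all_order all_algebra.
Set Implicit Arguments. Unset Strict Implicit. Unset Printing Implicit Defensive.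
Import Order.TTheory GRing.Theory Num.Theory.

(* A positive simple function sum_{i<n} r_i x_i over a bounded distributive
   lattice L is represented by its length n, coefficients r : 'I_n -> rat
   (assumed >= 0 in statements) and elements x : 'I_n -> L.
   For I a set of indices: x_I = \meet_(i in I) x i (empty meet = top = 1),
   r_I = \sum_(i in I) r i (empty sum = 0). *)
Definition psf_le (d : Order.disp_t) (L : tbDistrLatticeType d) (n m : nat)
  (r : 'I_n -> rat) (x : 'I_n -> L) (s : 'I_m -> rat) (y : 'I_m -> L) : Prop :=
  forall I : {set 'I_n},
    (\meet_(i in I) x i <=
       \join_(J : {set 'I_m} | ((\sum_(i in I) r i) <= (\sum_(j in J) s j))%R)
          \meet_(j in J) y j)%O.

From HB Require Import structures.
From mathcomp Require Import all_boot all_order all_algebra.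
Import Order.TTheory GRing.Theory Num.Theory.

(* For a simple function sum_j s_j y_j and a threshold q, call
     level s y q = \join_(J | q <= s_J) y_J
   the join of all the meets y_J whose total weight s_J reaches q.  Then
   sum_i r_i x_i <= sum_j s_j y_j says exactly that x_I <= level s y r_I
   for every I.  Two facts give transitivity:
   - level s y q is antitone in q (raising the threshold drops terms);
   - if sum s b <= sum t c, then level s b q <= level t c q for every q,
     since each term b_J with q <= s_J lies below level t c s_J, which lies
     below level t c q by antitonicity.
   Chaining x_I <= level s b r_I <= level t c r_I concludes. *)

Section Level.
Context {d : Order.disp_t} {L : tbLatticeType d} {m : nat}.
Variables (s : 'I_m -> rat) (y : 'I_m -> L).

Definition level (q : rat) : L :=
  (\join_(J : {set 'I_m} | (q <= \sum_(j in J) s j)%R) \meet_(j in J) y j)%O.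

Lemma level_antitone (q q' : rat) : (q <= q')%R -> (level q' <= level q)%O.
Proof.
move=> le_qq'; apply/joinsP => J le_q'J.
by apply: joins_sup; apply: le_trans le_qq' le_q'J.
Qed.

End Level.

Lemma psf_leE (d : Order.disp_t) (L : tbDistrLatticeType d) (n m : nat)
    (r : 'I_n -> rat) (x : 'I_n -> L) (s : 'I_m -> rat) (y : 'I_m -> L) :
  psf_le r x s y <->
  forall I : {set 'I_n}, (\meet_(i in I) x i <= level s y (\sum_(i in I) r i))%O.
Proof. by []. Qed.

Lemma psf_le_level (d : Order.disp_t) (L : tbDistrLatticeType d) (m p : nat)
    (s : 'I_m -> rat) (b : 'I_m -> L) (t : 'I_p -> rat) (c : 'I_p -> L) :
  psf_le s b t c -> forall q : rat, (level s b q <= level t c q)%O.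
Proof.
move=> /psf_leE le_bc q; apply/joinsP => J le_qJ.
by apply: le_trans (le_bc J) _; apply: level_antitone.
Qed.

Theorem lemma4p4 (d : Order.disp_t) (L : tbDistrLatticeType d) (n m p : nat)
  (r : 'I_n -> rat) (a : 'I_n -> L)
  (s : 'I_m -> rat) (b : 'I_m -> L)
  (t : 'I_p -> rat) (c : 'I_p -> L) :
  (forall i, (0 <= r i)%R) -> (forall j, (0 <= s j)%R) -> (forall k, (0 <= t k)%R) ->
  psf_le r a s b -> psf_le s b t c -> psf_le r a t c.
Proof.
move=> _ _ _ /psf_leE le_ab le_bc; apply/psf_leE => I.
by apply: le_trans (le_ab I) _; apply: psf_le_level.
Qed.
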